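(* Let $T\ge2$. Let $\Phi$ be the $T\times T$ matrix with $\Phi_{ij}=1$ if $i>j$ and $\Phi_{ij}=0$ otherwise; let $\mathcal P=I_T-\frac1T\mathbf 1\mathbf 1^*$ be the orthogonal projector onto the hyperplane $V\subset\mathbb R^T$ (or $\mathbb C^T$) orthogonal to $\mathbf 1=(1,\dots,1)^*$; let $\tilde\Phi=\mathcal P\Phi\mathcal P$. Let $F$ be the cyclic lead operator $F(x_1,x_2,\dots,x_T)=(x_2,x_3,\dots,x_T,x_1)$, which preserves $V$, and let $F_V$ denote its restriction to $V$. Then $\tilde\Phi$ preserves $V$, and its restriction to $V$ equals $-(\mathbf 1_V-F_V)^{-1}$, where $\mathbf 1_V$ is the identity operator on $V$. *)

(* Vectors of R^T (or C^T) are column vectors 'cV[R]_T,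
   indices 'I_T stand for {1,...,T} (shifted by one). *)
From HB Require Import structures.
From mathcomp Require Import all_boot all_order all_algebra.
Unset Printing Implicit Defensive.
Import Order.TTheory GRing.Theory Num.Theory.
Local Open Scope ring_scope.

Definition Phi (R : numFieldType) (T : nat) : 'M[R]_T :=
  \matrix_(i < T, j < T) (if (j < i)%N then 1 else 0).

Definition ones (R : numFieldType) (T : nat) : 'cV[R]_T := const_mx 1.

Definition Pproj (R : numFieldType) (T : nat) : 'M[R]_T :=
  1%:M - (T%:R)^-1 *: (ones R T *m (ones R T)^T).

Definition Phit (R : numFieldType) (T : nat) : 'M[R]_T :=
  Pproj R T *m Phi R T *m Pproj R T.

Definition Flead (R : numFieldType) (T : nat) : 'M[R]_T :=
  \matrix_(i < T, j < T) (if j == ordS i then 1 else 0).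

Definition Vhyp (R : numFieldType) (T : nat) : pred 'cV[R]_T :=
  [pred x | (ones R T)^T *m x == 0].

From HB Require Import structures.
From mathcomp Require Import all_boot all_order all_algebra.
Import Order.TTheory GRing.Theory Num.Theory.
Local Open Scope ring_scope.

(* Phi is a discrete summation and 1 - F a (negated) cyclic forward difference, so
   they are mutually inverse up to rank-one corrections:
     (1 - F) Phi = e_T 1^* - I   and   Phi (1 - F) = 1 e_1^* - I.
   Since P 1 = 0 and 1^* P = 0, the projector P kills both corrections, while 1 - F
   absorbs P on either side because (1 - F) 1 = 0 and 1^* (1 - F) = 0.  Hence
   (1 - F) Phi~ = Phi~ (1 - F) = -P, which is -1 on V. *)

Section Operators.
Variables (R : numFieldType) (T : nat).
Implicit Types (x : 'cV[R]_T).

Lemma Flead_mulmx m (A : 'M[R]_(T, m)) i j : (Flead R T *m A) i j = A (ordS i) j.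
Proof.
rewrite mxE (bigD1 (ordS i)) //= mxE eqxx mul1r big1 ?addr0 // => k /negbTE nk.
by rewrite mxE nk mul0r.
Qed.

Lemma mulmx_Flead m (A : 'M[R]_(m, T)) i j : (A *m Flead R T) i j = A i (ord_pred j).
Proof.
rewrite mxE (bigD1 (ord_pred j)) //= mxE ord_predK eqxx mulr1 big1 ?addr0 // => k nk.
by rewrite mxE; case: (j =P ordS k) nk => [->|_ _]; rewrite ?ordSK ?eqxx ?mulr0.
Qed.

Lemma IB_Flead_mulmx m (A : 'M[R]_(T, m)) i j :
  ((1%:M - Flead R T) *m A) i j = A i j - A (ordS i) j.
Proof. by rewrite mulmxBl mul1mx [LHS]mxE [in X in _ + X]mxE Flead_mulmx. Qed.

Lemma mulmx_IB_Flead m (A : 'M[R]_(m, T)) i j :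
  (A *m (1%:M - Flead R T)) i j = A i j - A i (ord_pred j).
Proof. by rewrite mulmxBr mulmx1 [LHS]mxE [in X in _ + X]mxE mulmx_Flead. Qed.

Lemma Flead_mulmx_ones : Flead R T *m ones R T = ones R T.
Proof. by apply/matrixP => i j; rewrite Flead_mulmx !mxE. Qed.

Lemma tr_ones_mulmx_Flead : (ones R T)^T *m Flead R T = (ones R T)^T.
Proof. by apply/matrixP => i j; rewrite mulmx_Flead !mxE. Qed.

Lemma tr_ones_mulmx_ones : (ones R T)^T *m ones R T = T%:R%:M.
Proof.
apply/matrixP => i j; rewrite !ord1 !mxE /=.
under eq_bigr do rewrite !mxE mul1r.
by rewrite sumr_const card_ord.
Qed.

Lemma IB_Flead_mulmx_ones : (1%:M - Flead R T) *m ones R T = 0.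
Proof. by rewrite mulmxBl mul1mx Flead_mulmx_ones subrr. Qed.

Lemma tr_ones_mulmx_IB_Flead : (ones R T)^T *m (1%:M - Flead R T) = 0.
Proof. by rewrite mulmxBr mulmx1 tr_ones_mulmx_Flead subrr. Qed.

Lemma Pproj_mulmx_id m (A : 'M[R]_(T, m)) :
  (ones R T)^T *m A = 0 -> Pproj R T *m A = A.
Proof.
move=> A_ortho; rewrite /Pproj mulmxBl mul1mx -scalemxAl -mulmxA A_ortho.
by rewrite mulmx0 scaler0 subr0.
Qed.

Lemma mulmx_Pproj_id m (A : 'M[R]_(m, T)) :
  A *m ones R T = 0 -> A *m Pproj R T = A.
Proof.
move=> A_ortho; rewrite /Pproj mulmxBr mulmx1 -scalemxAr mulmxA A_ortho.
by rewrite mul0mx scaler0 subr0.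
Qed.

Lemma Pproj_mulmx_Vhyp x : x \in Vhyp R T -> Pproj R T *m x = x.
Proof. by rewrite inE => /eqP /Pproj_mulmx_id. Qed.

Lemma Flead_mulmx_Vhyp x : x \in Vhyp R T -> Flead R T *m x \in Vhyp R T.
Proof. by rewrite !inE /= mulmxA tr_ones_mulmx_Flead. Qed.

Hypothesis T_gt0 : (0 < T)%N.

Let T_neq0 : (T%:R : R) != 0. Proof. by rewrite pnatr_eq0 -lt0n. Qed.

Lemma tr_ones_mulmx_Pproj : (ones R T)^T *m Pproj R T = 0.
Proof.
rewrite /Pproj mulmxBr mulmx1 -scalemxAr mulmxA tr_ones_mulmx_ones.
by rewrite mul_scalar_mx scalerA mulVf // scale1r subrr.
Qed.

Lemma Pproj_mulmx_ones : Pproj R T *m ones R T = 0.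
Proof.
rewrite /Pproj mulmxBl mul1mx -scalemxAl -mulmxA tr_ones_mulmx_ones.
by rewrite mul_mx_scalar scalerA mulVf // scale1r subrr.
Qed.

Lemma Phit_mulmx_Vhyp x : Phit R T *m x \in Vhyp R T.
Proof. by rewrite inE /= /Phit !mulmxA tr_ones_mulmx_Pproj !mul0mx. Qed.

End Operators.

Section Inverse.
Variables (R : numFieldType) (n : nat).
Local Notation T := n.+1.

Lemma IB_Flead_mulmx_Phi :
  (1%:M - Flead R T) *m Phi R T = delta_mx ord_max 0 *m (ones R T)^T - 1%:M.
Proof.
apply/matrixP => i j; rewrite IB_Flead_mulmx !mxE big_ord1 !mxE /= eqxx andbT mulr1.
have [->|ne] := eqVneq i ord_max.
  rewrite /= modnn ltn0 subr0 -val_eqE /=.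
  case: (ltngtP j n) (ltn_ord j) => [_ _|nj|_ _]; rewrite ?subr0 ?subrr //.
  by rewrite ltnS leqNgt nj.
have ltin : (i.+1 < T)%N by rewrite ltnS ltn_neqAle -ltnS ltn_ord andbT.
rewrite modn_small // ltnS -val_eqE /=.
by case: ltngtP; rewrite ?subrr ?sub0r.
Qed.

Lemma Phi_mulmx_IB_Flead :
  Phi R T *m (1%:M - Flead R T) = ones R T *m delta_mx 0 0 - 1%:M.
Proof.
apply/matrixP => i j; rewrite mulmx_IB_Flead !mxE big_ord1 !mxE /= mul1r.
case: j => [[|k] jT]; rewrite -[i == _]val_eqE /=.
  rewrite modn_small // [(n < i)%N]ltnNge leq_ord subr0 lt0n.
  by case: eqP; rewrite ?subrr ?subr0.
rewrite modnDr modn_small ?(ltnW jT) // sub0r.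
by case: (ltngtP k.+1 i); rewrite ?subrr ?sub0r ?oppr0.
Qed.

Lemma IB_Flead_mulmx_Phit : (1%:M - Flead R T) *m Phit R T = - Pproj R T.
Proof.
rewrite /Phit !mulmxA [(1%:M - _) *m _]mulmx_Pproj_id ?IB_Flead_mulmx_ones //.
rewrite IB_Flead_mulmx_Phi mulmxBl mul1mx.
by rewrite -mulmxA tr_ones_mulmx_Pproj // mulmx0 sub0r.
Qed.

Lemma Phit_mulmx_IB_Flead : Phit R T *m (1%:M - Flead R T) = - Pproj R T.
Proof.
rewrite /Phit -!mulmxA [_ *m (1%:M - _)]Pproj_mulmx_id ?tr_ones_mulmx_IB_Flead //.
rewrite Phi_mulmx_IB_Flead mulmxBr mulmx1.
by rewrite mulmxA Pproj_mulmx_ones // mul0mx sub0r.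
Qed.

End Inverse.

Theorem lemma1 (R : numFieldType) (T : nat) (hT : (2 <= T)%N) :
  (* F preserves V *)
  (forall x, x \in Vhyp R T -> Flead R T *m x \in Vhyp R T) /\
  (* Phi~ preserves V *)
  (forall x, x \in Vhyp R T -> Phit R T *m x \in Vhyp R T) /\
  (* 1_V - F_V is invertible on V (bijective V -> V) *)
  {in Vhyp R T &, injective (fun x => (1%:M - Flead R T) *m x)} /\
  (forall y, y \in Vhyp R T ->
     exists2 x, x \in Vhyp R T & (1%:M - Flead R T) *m x = y) /\
  (* Phi~|_V = -(1_V - F_V)^{-1} *)
  (forall x, x \in Vhyp R T ->
     (1%:M - Flead R T) *m (Phit R T *m x) = - x).
Proof.
case: T hT => [//|n _].
have right_inv x : x \in Vhyp R n.+1 -> (1%:M - Flead R n.+1) *m (Phit R n.+1 *m x) = - x.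
  by move=> xV; rewrite mulmxA IB_Flead_mulmx_Phit mulNmx Pproj_mulmx_Vhyp.
have left_inv x : x \in Vhyp R n.+1 -> Phit R n.+1 *m ((1%:M - Flead R n.+1) *m x) = - x.
  by move=> xV; rewrite mulmxA Phit_mulmx_IB_Flead mulNmx Pproj_mulmx_Vhyp.
split; first exact: Flead_mulmx_Vhyp.
split; first by move=> x _; apply: Phit_mulmx_Vhyp.
split.
  move=> x y xV yV /= /(congr1 (mulmx (Phit R n.+1))).
  by rewrite !left_inv // => /oppr_inj.
split=> // y yV; exists (- (Phit R n.+1 *m y)).
  by rewrite -mulmxN Phit_mulmx_Vhyp.
by rewrite mulmxN right_inv ?opprK.
Qed.
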